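(* Let $G_0$ be a finite group with an involutive automorphism $g\mapsto\tilde g$, and $\omega$ a normalized $U(1)$-valued 2-cocycle on $G_0$ with $\omega(g,h)\omega(\tilde g,\tilde h)=1$ for all $g,h$. Let $\mathcal D^\alpha$ be an irreducible projective unitary representation of $G_0$ with cocycle $\omega$, of dimension $d_\alpha$ and character $\chi_\alpha$, and define $\iota_\alpha=\frac1{|G_0|}\sum_{g\in G_0}\omega(\tilde g,g)\chi_\alpha(\tilde gg)$. Then $g\mapsto\mathcal D^{\alpha^\star}(g):=\overline{\mathcal D^\alpha(\tilde g)}$ is again an irreducible projective unitary representation with cocycle $\omega$, $\iota_\alpha\in\{0,1,-1\}$, and: (1) $\iota_\alpha=0$ if and only if $\alpha^\star$ is inequivalent to $\alpha$; (2) $\iota_\alpha=1$ if and only if there is a unitary change of basis after which $\overline{\mathcal D^\alpha(\tilde g)}=\mathcal D^\alpha(g)$ for all $g\in G_0$; (3) $\iota_\alpha=-1$ if and only if $d_\alpha$ is even and there is a unitary change of basis after which $\overline{\mathcal D^\alpha(\tilde g)}=Y\mathcal D^\alpha(g)Y$ for all $g$, where $Y=\sigma_y\otimes\mathbb{1}_{d_\alpha/2}$. *)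

From HB Require Import structures.
From mathcomp Require Import all_boot all_order all_algebra all_fingroup all_field.
Set Implicit Arguments.
Unset Strict Implicit.
Unset Printing Implicit Defensive.
Import Order.TTheory GRing.Theory Num.Theory.
Local Open Scope ring_scope.

Definition ctr_mx (m n : nat) (A : 'M[algC]_(m, n)) : 'M[algC]_(n, m) :=
  (map_mx (fun x : algC => x^*) A)^T.

Definition entry_conj_mx (m n : nat) (A : 'M[algC]_(m, n)) : 'M[algC]_(m, n) :=
  map_mx (fun x : algC => x^*) A.

Definition unitaryP_mx (d : nat) (U : 'M[algC]_d) : Prop :=
  U *m ctr_mx U = 1%:M.

Definition normalized_U1_cocycle (gT : finGroupType) (w : gT -> gT -> algC) : Prop :=
  [/\ forall g h, `|w g h| = 1,
      forall g h k, w g h * w (g * h)%g k = w g (h * k)%g * w h k,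
      forall g, w 1%g g = 1 &
      forall g, w g 1%g = 1].

Definition involutive_aut (gT : finGroupType) (t : gT -> gT) : Prop :=
  (forall g h, t (g * h)%g = (t g * t h)%g) /\ (forall g, t (t g) = g).

Definition proj_unitary_rep (gT : finGroupType) (w : gT -> gT -> algC)
    (d : nat) (D : gT -> 'M[algC]_d) : Prop :=
  (forall g h, D g *m D h = w g h *: D (g * h)%g) /\
  (forall g, unitaryP_mx (D g)).

(* A subspace is the row space of U (vectors written as rows);
   v |-> D g v on columns corresponds to u |-> u (D g)^T on rows. *)
Definition irreducible_rep (gT : finGroupType) (d : nat) (D : gT -> 'M[algC]_d) : Prop :=
  (0 < d)%N /\
  forall U : 'M[algC]_d, (forall g, (U *m (D g)^T <= U)%MS) ->
    U = 0 \/ row_full U.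

Definition irr_proj_unitary_rep (gT : finGroupType) (w : gT -> gT -> algC)
    (d : nat) (D : gT -> 'M[algC]_d) : Prop :=
  proj_unitary_rep w D /\ irreducible_rep D.

Definition equiv_rep (gT : finGroupType) (d : nat) (D1 D2 : gT -> 'M[algC]_d) : Prop :=
  exists P : 'M[algC]_d, P \in unitmx /\ forall g, D2 g = P *m D1 g *m invmx P.

Definition proj_character (gT : finGroupType) (d : nat) (D : gT -> 'M[algC]_d) (g : gT) : algC :=
  \tr (D g).

Definition iota_ind (gT : finGroupType) (t : gT -> gT) (w : gT -> gT -> algC)
    (d : nat) (D : gT -> 'M[algC]_d) : algC :=
  (#|gT|%:R)^-1 * \sum_(g : gT) w (t g) g * proj_character D (t g * g)%g.

Definition star_rep (gT : finGroupType) (t : gT -> gT) (d : nat)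
    (D : gT -> 'M[algC]_d) : gT -> 'M[algC]_d :=
  fun g => entry_conj_mx (D (t g)).

Definition change_basis (gT : finGroupType) (d : nat) (U : 'M[algC]_d)
    (D : gT -> 'M[algC]_d) : gT -> 'M[algC]_d :=
  fun g => U *m D g *m ctr_mx U.

(* Y = sigma_y (x) 1_{d/2}, i.e. the block matrix [[0, -i 1],[i 1, 0]]
   (meaningful for d even) *)
Definition Ymx (d : nat) : 'M[algC]_d :=
  \matrix_(i < d, j < d)
     (if (j : nat) == (i + d./2)%N then - 'i
      else if (i : nat) == (j + d./2)%N then 'i else 0).

(* Twirling by the group, X |-> \sum_g D*(g) X D(g)^dagger, intertwines D with
   D*(g) = conj (D (~g)); the two cocycles agree because |w| = 1 and
   w(g,h) w(~g,~h) = 1.  By Schur's lemma the twirl vanishes when D* is not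
   equivalent to D, and otherwise D* = P D P^dagger for a unitary P.  As ~~g = g,
   P conj(P) commutes with D, hence is a scalar c, and P = c P^T forces c = +-1.
   Evaluating the twirl on matrix units gives
   |G0| conj(iota) = \sum_g tr (D*(g) conj (D g)) = (|G0| / d) tr (P conj(P)),
   so iota is 0, resp. c.  Finally the antiunitary map J x = conj(x) P on row
   vectors satisfies J^2 = c: for c = 1 an orthonormal basis of J-fixed vectors
   gives the real form, while for c = -1 the determinant forces d to be even and
   an orthonormal family (e_k) orthogonal to all J e_l, completed by the i J e_k,
   gives the normal form with Y. *)

From HB Require Import structures.
From mathcomp Require Import all_boot all_order all_algebra all_fingroup all_field.
From mathcomp Require Import zify.
From Stdlib Require Import Classical_Prop.
Set Implicit Arguments.
Unset Strict Implicit.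
Unset Printing Implicit Defensive.
Import Order.TTheory GRing.Theory Num.Theory Num.Def.
Local Open Scope ring_scope.

Local Notation cj := entry_conj_mx.
Local Notation ctr := ctr_mx.

Lemma ctrE m n (A : 'M[algC]_(m, n)) : ctr A = (cj A)^T.
Proof. by []. Qed.

Section ConjugateTranspose.
Variables m n p : nat.
Implicit Types A B : 'M[algC]_(m, n).

Lemma cjM A (C : 'M[algC]_(n, p)) : cj (A *m C) = cj A *m cj C.
Proof. by rewrite /entry_conj_mx map_mxM. Qed.
Lemma cjK A : cj (cj A) = A.
Proof. by apply/matrixP=> i j; rewrite !mxE conjCK. Qed.
Lemma cjZ a A : cj (a *: A) = a^* *: cj A.
Proof. by rewrite /entry_conj_mx map_mxZ. Qed.
Lemma cjD A B : cj (A + B) = cj A + cj B.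
Proof. by rewrite /entry_conj_mx map_mxD. Qed.
Lemma cj0 : cj (0 : 'M[algC]_(m, n)) = 0.
Proof. by rewrite /entry_conj_mx map_mx0. Qed.
Lemma cj_tr A : cj A^T = (cj A)^T.
Proof. by rewrite /entry_conj_mx map_trmx. Qed.
Lemma cj_col A (C : 'M[algC]_(p, n)) : cj (col_mx A C) = col_mx (cj A) (cj C).
Proof. by rewrite /entry_conj_mx map_col_mx. Qed.

Lemma ctrM A (C : 'M[algC]_(n, p)) : ctr (A *m C) = ctr C *m ctr A.
Proof. by rewrite !ctrE cjM trmx_mul. Qed.
Lemma ctrZ a A : ctr (a *: A) = a^* *: ctr A.
Proof. by rewrite !ctrE cjZ linearZ. Qed.
Lemma ctr0 : ctr (0 : 'M[algC]_(m, n)) = 0.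
Proof. by rewrite !ctrE cj0 trmx0. Qed.
Lemma ctrK A : ctr (ctr A) = A.
Proof. by rewrite !ctrE cj_tr cjK trmxK. Qed.
Lemma cj_ctr A : cj (ctr A) = A^T.
Proof. by rewrite !ctrE cj_tr cjK. Qed.
Lemma ctr_cj A : ctr (cj A) = A^T.
Proof. by rewrite ctrE cjK. Qed.
Lemma ctr_tr A : ctr A^T = cj A.
Proof. by rewrite !ctrE cj_tr trmxK. Qed.
Lemma ctr_col A (C : 'M[algC]_(p, n)) : ctr (col_mx A C) = row_mx (ctr A) (ctr C).
Proof. by rewrite !ctrE cj_col tr_col_mx. Qed.
End ConjugateTranspose.

Lemma cj_scalar n a : cj (a%:M : 'M[algC]_n) = (a^*)%:M.
Proof. by rewrite /entry_conj_mx map_scalar_mx. Qed.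
Lemma cj1 n : cj (1%:M : 'M[algC]_n) = 1%:M.
Proof. by rewrite /entry_conj_mx map_mx1. Qed.
Lemma ctr1 n : ctr (1%:M : 'M[algC]_n) = 1%:M.
Proof. by rewrite !ctrE cj1 trmx1. Qed.

Section Unitary.
Variable n : nat.
Implicit Types U V : 'M[algC]_n.

Lemma unitaryC U : unitaryP_mx U -> ctr U *m U = 1%:M.
Proof. exact: mulmx1C. Qed.
Lemma unitary_cj U : unitaryP_mx U -> unitaryP_mx (cj U).
Proof. by move=> uU; rewrite /unitaryP_mx ctr_cj -cj_ctr -cjM uU cj1. Qed.
Lemma unitary_mul U V : unitaryP_mx U -> unitaryP_mx V -> unitaryP_mx (U *m V).
Proof. by move=> uU uV; rewrite /unitaryP_mx ctrM mulmxA -(mulmxA U) uV mulmx1. Qed.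
Lemma trmx_cj_unitary U : unitaryP_mx U -> U^T *m cj U = 1%:M.
Proof. by move=> uU; rewrite -cj_ctr -cjM unitaryC // cj1. Qed.
Lemma unitary_tr U : unitaryP_mx U -> unitaryP_mx U^T.
Proof. by move=> uU; rewrite /unitaryP_mx ctr_tr trmx_cj_unitary. Qed.
Lemma unitary_neq0 U : (0 < n)%N -> unitaryP_mx U -> U != 0.
Proof.
move=> n_gt0 uU; rewrite -mxrank_eq0 -lt0n (leq_trans n_gt0) //.
by rewrite -{1}(mxrank1 algC n) -uU mxrankM_maxl.
Qed.
End Unitary.

Section Schur.
Variables (gT : finGroupType) (d : nat) (D : gT -> 'M[algC]_d).
Hypothesis irrD : irreducible_rep D.

Lemma schur_intertwiner (S : gT -> 'M[algC]_d) (T : 'M[algC]_d) :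
  (forall h, S h *m T = T *m D h) -> T = 0 \/ T \in unitmx.
Proof.
move=> hT; have [_ irr] := irrD.
have kerT_stable g : (kermx T^T *m (D g)^T <= kermx T^T)%MS.
  apply/sub_kermxP.
  by rewrite -mulmxA -trmx_mul -hT trmx_mul mulmxA mulmx_ker mul0mx.
case: (irr _ kerT_stable) => [/eqP|].
  by rewrite kermx_eq0 row_free_unit unitmx_tr; right.
rewrite row_full_unit => uK; left; apply/eqP; rewrite -trmx_eq0.
have := mulmx_ker T^T => /(congr1 (mulmx (invmx (kermx T^T)))).
by rewrite mulmxA mulVmx // mul1mx mulmx0 => ->.
Qed.

Lemma schur_scalar (M : 'M[algC]_d) :
  (forall h, M *m D h = D h *m M) -> exists a, M = a%:M.
Proof.
move=> hM; have [d_gt0 _] := irrD.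
have [a /eigenvalueP [v hv v_neq0]] := eigenvalue_closed M d_gt0.
exists a; apply/eqP; rewrite -subr_eq0; apply/eqP.
have [//|uMa] : M - a%:M = 0 \/ M - a%:M \in unitmx.
  apply: (schur_intertwiner (S := D)) => h.
  by rewrite mulmxBl mulmxBr hM scalar_mxC.
have : v *m (M - a%:M) = 0 by rewrite mulmxBr hv mul_mx_scalar subrr.
move/(congr1 (mulmx^~ (invmx (M - a%:M)))).
by rewrite -mulmxA mulmxV // mulmx1 mul0mx => v0; rewrite v0 eqxx in v_neq0.
Qed.
End Schur.

Lemma mxtrace_mul_delta (R : comPzRingType) n (A : 'M[R]_n) i j :
  \tr (A *m delta_mx j i) = A i j.
Proof.
rewrite -(mul_delta_mx (0 : 'I_1)) mulmxA -colE mxtrace_mulC -rowE.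
by rewrite /mxtrace big_ord1 !mxE.
Qed.

Section Twirl.
Variables (gT : finGroupType) (w : gT -> gT -> algC) (d : nat).
Implicit Types A B : gT -> 'M[algC]_d.

Definition twirl A B (X : 'M[algC]_d) := \sum_(g : gT) A g *m X *m ctr (B g).

Lemma twirl_intertwines A B :
  (forall g h, A g *m A h = w g h *: A (g * h)%g) -> proj_unitary_rep w B ->
  forall X h, A h *m twirl A B X = twirl A B X *m B h.
Proof.
move=> hA [hBm hBu] X h.
have hB g : ctr (B (h * g)%g) *m B h = w h g *: ctr (B g).
  have := congr1 (fun M => ctr (B (h * g)%g) *m M *m ctr (B g)) (hBm h g).
  rewrite /= -!mulmxA (hBu g) mulmx1 -scalemxAl -scalemxAr => ->.
  by rewrite mulmxA unitaryC // mul1mx.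
rewrite /twirl mulmx_sumr mulmx_suml [in RHS](reindex_inj (mulgI h)) /=.
apply: eq_bigr => g _.
by rewrite !mulmxA hA -!mulmxA hB -scalemxAl -!scalemxAr scalemxAl.
Qed.

(* The trace fixes the Schur scalar, since each summand has the trace of X. *)
Lemma twirl_self D : irr_proj_unitary_rep w D ->
  forall X, twirl D D X = (#|gT|%:R / d%:R * \tr X)%:M.
Proof.
move=> [[hDm hDu] irrD] X.
have [a ha] := schur_scalar irrD
  (fun h => esym (twirl_intertwines hDm (conj hDm hDu) X h)).
rewrite ha; congr (_%:M).
have [d_gt0 _] := irrD.
have d_neq0 : (d%:R : algC) != 0 by rewrite pnatr_eq0 -lt0n.
have : \tr (twirl D D X) = #|gT|%:R * \tr X.
  rewrite /twirl raddf_sum /= (eq_bigr (fun _ => \tr X)) ?sumr_const ?mulr_natl //.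
  by move=> g _; rewrite mxtrace_mulC mulmxA unitaryC // mul1mx.
rewrite ha mxtrace_scalar => trE.
by apply: (mulIf d_neq0); rewrite mulr_natr trE mulrAC divfK.
Qed.

Lemma sum_trace_twirl A B :
  \sum_(g : gT) \tr (A g *m cj (B g)) = \sum_i \sum_j twirl A B (delta_mx j i) i j.
Proof.
rewrite (eq_bigr (fun g => \sum_i \sum_j A g i j * (B g j i)^*)); last first.
  move=> g _; apply: eq_bigr => i _; rewrite mxE.
  by apply: eq_bigr => j _; rewrite !mxE.
rewrite exchange_big; apply: eq_bigr => i _.
rewrite exchange_big; apply: eq_bigr => j _.
rewrite /twirl summxE; apply: eq_bigr => g _.
rewrite -(mul_delta_mx (0 : 'I_1)) !mulmxA -colE -mulmxA -rowE.
by rewrite mxE big_ord1 !mxE.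
Qed.
End Twirl.

Lemma unitary_rescale n (P : 'M[algC]_n) b : P *m ctr P = b%:M -> 0 < b ->
  exists2 U, unitaryP_mx U & forall X, P *m X *m invmx P = U *m X *m ctr U.
Proof.
move=> gramP b_gt0; set a := (sqrtC b)^-1.
have a_real : a^* = a by apply/conj_Creal/ger0_real; rewrite invr_ge0 sqrtC_ge0 ltW.
have aab : a * a = b^-1 by rewrite -invfM -expr2 sqrtCK.
have b_neq0 : b != 0 by rewrite gt_eqF.
have invP : invmx P = b^-1 *: ctr P.
  have PPinv : P *m (b^-1 *: ctr P) = 1%:M.
    by rewrite -scalemxAr gramP scale_scalar_mx mulVf.
  by rewrite -[invmx P]mulmx1 -PPinv mulmxA mulVmx ?mul1mx //; case/mulmx1_unit: PPinv.
exists (a *: P) => [|X].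
  rewrite /unitaryP_mx ctrZ a_real -scalemxAl -scalemxAr scalerA aab gramP.
  by rewrite scale_scalar_mx mulVf.
by rewrite ctrZ a_real invP -!scalemxAl -!scalemxAr scalerA aab.
Qed.

Lemma equiv_gram_scalar (gT : finGroupType) d (D S : gT -> 'M[algC]_d) (P : 'M[algC]_d) :
  irreducible_rep D -> (forall g, unitaryP_mx (D g)) -> (forall g, unitaryP_mx (S g)) ->
  P \in unitmx -> (forall g, S g = P *m D g *m invmx P) ->
  exists2 b, 0 < b & P *m ctr P = b%:M.
Proof.
move=> irrD uD uS uP hS; have [d_gt0 _] := irrD.
set Pi := invmx P; set N := Pi *m ctr Pi.
have ctrPPi : ctr P *m ctr Pi = 1%:M by rewrite -ctrM mulVmx // ctr1.
have N_comm h : N *m D h = D h *m N.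
  have N_inv : D h *m N *m ctr (D h) = N.
    have := congr1 (fun M => Pi *m M *m ctr Pi) (uS h).
    rewrite /= hS !ctrM !mulmxA mulVmx // mul1mx mulmx1.
    by rewrite -!mulmxA ctrPPi mulmx1 !mulmxA.
  by rewrite -{1}N_inv -(mulmxA _ (ctr (D h))) unitaryC ?mulmx1.
have [a Na] := schur_scalar irrD N_comm.
have aPP : a *: (P *m ctr P) = 1%:M.
  have := congr1 (fun M => P *m M *m ctr P) Na.
  rewrite /= /N !mulmxA mulmxV // mul1mx -ctrM mulmxV // ctr1 => ->.
  by rewrite mul_mx_scalar scalemxAl.
have a_neq0 : a != 0.
  by apply: contra_eq_neq aPP => ->; rewrite scale0r eq_sym -mxrank_eq0 mxrank1 -lt0n.
have gramP : P *m ctr P = a^-1%:M.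
  by rewrite -[LHS]scale1r -(mulVf a_neq0) -scalerA aPP scalemx1.
exists a^-1 => //; rewrite lt_def invr_eq0 a_neq0 /=.
have := congr1 (fun M : 'M[algC]_d => M (Ordinal d_gt0) (Ordinal d_gt0)) gramP.
rewrite /= !mxE eqxx mulr1n => <-.
by apply: sumr_ge0 => k _; rewrite !mxE mul_conjC_ge0.
Qed.

Lemma unitary_equiv (gT : finGroupType) d (D S : gT -> 'M[algC]_d) :
  irreducible_rep D -> (forall g, unitaryP_mx (D g)) -> (forall g, unitaryP_mx (S g)) ->
  equiv_rep D S -> exists2 U, unitaryP_mx U & forall g, S g = U *m D g *m ctr U.
Proof.
move=> irrD uD uS [P [uP hS]].
have [b b_gt0 gramP] := equiv_gram_scalar irrD uD uS uP hS.
have [U uU PU] := unitary_rescale gramP b_gt0.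
by exists U => // g; rewrite hS PU.
Qed.

Lemma normalize_row n (v : 'rV[algC]_n) : v != 0 ->
  exists a : algC, a^* = a /\ (a *: v) *m ctr (a *: v) = 1%:M.
Proof.
move=> v_neq0; set b := (v *m ctr v) 0 0.
have b_gt0 : 0 < b by rewrite /b ctrE /entry_conj_mx map_trmx -dotmxE dotmx_is_dotmx.
have sb_ge0 : 0 <= (sqrtC b)^-1 by rewrite invr_ge0 sqrtC_ge0 ltW.
exists (sqrtC b)^-1; split; first exact/conj_Creal/ger0_real.
rewrite ctrZ (conj_Creal (ger0_real sb_ge0)) -scalemxAl -scalemxAr scalerA.
rewrite -invfM -expr2 sqrtCK [v *m _]mx11_scalar -/b scale_scalar_mx.
by rewrite mulVf // gt_eqF.
Qed.

Lemma left_kernel_nonzero n k (A : 'M[algC]_(n, k)) : (k < n)%N ->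
  exists2 v : 'rV_n, v != 0 & v *m A = 0.
Proof.
move=> lt_kn; have : kermx A != 0.
  rewrite -mxrank_eq0 mxrank_ker -lt0n subn_gt0.
  exact: leq_ltn_trans (rank_leq_col A) lt_kn.
by case/rowV0Pn=> v /sub_kermxP vA v_neq0; exists v.
Qed.

Lemma antiunitary_orth n k (P : 'M[algC]_n) (x : 'rV[algC]_n) (E : 'M[algC]_(k, n)) :
  unitaryP_mx P -> x *m ctr E = 0 -> (cj x *m P) *m ctr (cj E *m P) = 0.
Proof.
move=> uP xE; rewrite ctrM ctr_cj mulmxA -(mulmxA _ P) uP mulmx1.
by rewrite -cj_ctr -cjM xE cj0.
Qed.

Section RealStructure.
Variables (n : nat) (P : 'M[algC]_n).
Hypotheses (uP : unitaryP_mx P) (hP : P *m cj P = 1%:M).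

Lemma real_structure_invol k (x : 'M[algC]_(k, n)) : cj (cj x *m P) *m P = x.
Proof. by rewrite cjM cjK -mulmxA (mulmx1C hP) mulmx1. Qed.

Lemma real_structure_extend k (E : 'M[algC]_(k, n)) : (k < n)%N ->
  E *m ctr E = 1%:M -> cj E *m P = E ->
  exists E' : 'M[algC]_(1 + k, n), E' *m ctr E' = 1%:M /\ cj E' *m P = E'.
Proof.
move=> lt_kn hE1 hE2.
have [v v_neq0 vE] := left_kernel_nonzero (ctr E) lt_kn.
have fixed (u : 'rV_n) : cj (u + cj u *m P) *m P = u + cj u *m P.
  by rewrite cjD mulmxDl real_structure_invol addrC.
have orth (u : 'rV_n) : u *m ctr E = 0 -> (u + cj u *m P) *m ctr E = 0.
  move=> uE; have := antiunitary_orth uP uE; rewrite hE2 => JuE.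
  by rewrite mulmxDl uE JuE addr0.
(* If v + Jv vanishes then Jv = -v, and then iv + J(iv) = 2iv does not. *)
have [y [y_neq0 y_fixed yE]] :
    exists y : 'rV_n, [/\ y != 0, cj y *m P = y & y *m ctr E = 0].
  have [vJv0|] := eqVneq (v + cj v *m P) 0; last first.
    by exists (v + cj v *m P); split; [|exact: fixed|exact: orth].
  exists ('i *: v + cj ('i *: v) *m P); split.
  - rewrite cjZ -scalemxAl conjCi.
    have -> : cj v *m P = - v by apply/eqP; rewrite -addr_eq0 addrC vJv0.
    rewrite scalerN scaleNr opprK -scalerDl scaler_eq0 negb_or v_neq0 andbT.
    by rewrite -mulr2n mulrn_eq0 neq0Ci.
  - exact: fixed.
  - by apply: orth; rewrite -scalemxAl vE scaler0.
have [a [a_real ya1]] := normalize_row y_neq0.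
have yaE : (a *: y) *m ctr E = 0 by rewrite -scalemxAl yE scaler0.
exists (col_mx (a *: y) E); split.
  rewrite ctr_col mul_col_row ya1 hE1 yaE.
  by rewrite -[E]ctrK -ctrM yaE ctr0 -scalar_mx_block.
by rewrite cj_col mul_col_mx cjZ a_real -scalemxAl y_fixed hE2.
Qed.

Lemma real_structure_rows k : (k <= n)%N ->
  exists E : 'M[algC]_(k, n), E *m ctr E = 1%:M /\ cj E *m P = E.
Proof.
elim: k => [|k IHk] le_kn; first by exists 0; split; apply/matrixP=> -[].
have [E [hE1 hE2]] := IHk (ltnW le_kn).
exact: real_structure_extend le_kn hE1 hE2.
Qed.

Lemma real_structure_basis : exists U : 'M[algC]_n, unitaryP_mx U /\ cj U *m P = U.
Proof. exact: real_structure_rows. Qed.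
End RealStructure.

Section QuaternionicStructure.
Variables (n : nat) (P : 'M[algC]_n).
Hypotheses (uP : unitaryP_mx P) (hP : P *m cj P = (-1)%:M).

Lemma quaternionic_cj : cj P = - ctr P.
Proof.
rewrite -[cj P]mul1mx -(unitaryC uP) -mulmxA hP mul_mx_scalar.
by rewrite scaleN1r.
Qed.

Lemma quaternionic_skew k l (A : 'M[algC]_(k, n)) (B : 'M[algC]_(l, n)) :
  A *m ctr (cj B *m P) = - (B *m ctr (cj A *m P))^T.
Proof.
rewrite !ctrM !ctr_cj !trmx_mul trmxK.
have -> : (ctr P)^T = - ctr P by rewrite {1}ctrE trmxK quaternionic_cj.
by rewrite mulmxN mulNmx opprK mulmxA.
Qed.

Lemma quaternionic_self_orth (e : 'rV[algC]_n) : e *m ctr (cj e *m P) = 0.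
Proof.
set M := e *m _.
have MN : M = - M.
  rewrite {1}/M quaternionic_skew -/M.
  by rewrite [M in M^T]mx11_scalar tr_scalar_mx -mx11_scalar.
have : M *+ 2 = 0 by rewrite mulr2n {1}MN addNr.
by move/eqP; rewrite -scaler_nat scaler_eq0 pnatr_eq0 => /eqP.
Qed.

Lemma quaternionic_extend k (E : 'M[algC]_(k, n)) : (k + k < n)%N ->
  E *m ctr E = 1%:M -> E *m ctr (cj E *m P) = 0 ->
  exists E' : 'M[algC]_(1 + k, n),
    E' *m ctr E' = 1%:M /\ E' *m ctr (cj E' *m P) = 0.
Proof.
move=> lt_kk hE1 hE2.
have [v v_neq0] := left_kernel_nonzero (ctr (col_mx E (cj E *m P))) lt_kk.
rewrite ctr_col mul_mx_row => /eqP; rewrite row_mx_eq0 => /andP[/eqP vE /eqP vJE].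
have [a [a_real va1]] := normalize_row v_neq0.
have eE : (a *: v) *m ctr E = 0 by rewrite -scalemxAl vE scaler0.
have eJE : (a *: v) *m ctr (cj E *m P) = 0 by rewrite -scalemxAl vJE scaler0.
exists (col_mx (a *: v) E); split.
  rewrite ctr_col mul_col_row va1 hE1 eE.
  by rewrite -[E]ctrK -ctrM eE ctr0 -scalar_mx_block.
rewrite cj_col (mul_col_mx (cj _) (cj E) P) ctr_col mul_col_row.
by rewrite quaternionic_self_orth eJE hE2 quaternionic_skew eJE trmx0 oppr0 block_mx0.
Qed.

Lemma quaternionic_rows k : (k + k <= n)%N ->
  exists E : 'M[algC]_(k, n), E *m ctr E = 1%:M /\ E *m ctr (cj E *m P) = 0.
Proof.
elim: k => [|k IHk] le_kkn; first by exists 0; split; apply/matrixP=> -[].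
have lt_kkn : (k + k < n)%N by rewrite addSn addnS in le_kkn; exact: ltnW.
have [E [hE1 hE2]] := IHk (ltnW lt_kkn).
exact: quaternionic_extend lt_kkn hE1 hE2.
Qed.
End QuaternionicStructure.

Lemma quaternionic_dim_even n (P : 'M[algC]_n) : P *m cj P = (-1)%:M -> ~~ odd n.
Proof.
move=> hP; apply/negP => odd_n; have := congr1 determinant hP.
rewrite det_mulmx /entry_conj_mx det_map_mx det_scalar -signr_odd odd_n expr1 => detN1.
by have := mul_conjC_ge0 (\det P); rewrite detN1 ler0N1.
Qed.

Lemma Ymx_block m :
  Ymx (m + m) = block_mx 0 (- 'i)%:M 'i%:M 0 :> 'M[algC]_(m + m).
Proof.
apply/matrixP=> i j; rewrite -(splitK i) -(splitK j).
case: (split i) => a; case: (split j) => b.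
all: rewrite ?block_mxEul ?block_mxEur ?block_mxEdl ?block_mxEdr !mxE /=.
all: rewrite addnn doubleK -?val_eqE /=.
all: have := ltn_ord a; have := ltn_ord b; do ![case: eqP => ? //=]; lia.
Qed.

Lemma scalar_mxN n (a : algC) : (- a)%:M = - a%:M :> 'M_n.
Proof. exact: raddfN. Qed.

Section YmxBlock.
Variable m : nat.
Local Notation Y := (Ymx (m + m) : 'M[algC]_(m + m)).

Lemma Ymx_cj : cj Y = - Y.
Proof.
rewrite Ymx_block /entry_conj_mx map_block_mx map_mx0 !map_scalar_mx /= rmorphN /= !conjCi.
by rewrite opp_block_mx oppr0 !scalar_mxN opprK.
Qed.

Lemma Ymx_ctr : ctr Y = Y.
Proof.
rewrite ctrE Ymx_cj linearN /= Ymx_block tr_block_mx !trmx0 !tr_scalar_mx.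
by rewrite opp_block_mx oppr0 !scalar_mxN opprK.
Qed.

Lemma Ymx_sqr : Y *m Y = 1%:M.
Proof.
rewrite Ymx_block mulmx_block !mul0mx !mulmx0 !add0r !addr0 -!scalar_mxM.
by rewrite mulrN mulNr -expr2 sqrCi opprK -scalar_mx_block.
Qed.

Lemma quaternionic_basis (P : 'M[algC]_(m + m)) :
  unitaryP_mx P -> P *m cj P = (-1)%:M ->
  exists U : 'M[algC]_(m + m), unitaryP_mx U /\ cj U *m P = Y *m U.
Proof.
move=> uP hP.
have [E [hE1 hE2]] := quaternionic_rows uP hP (leqnn (m + m)).
have JE_orth : cj E *m P *m ctr E = 0 by rewrite -[cj E *m P]ctrK -ctrM hE2 ctr0.
have JE1 : cj E *m P *m ctr (cj E *m P) = 1%:M.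
  by rewrite ctrM ctr_cj mulmxA -(mulmxA _ P) uP mulmx1 -cj_ctr -cjM hE1 cj1.
have cjPP : cj P *m P = (-1)%:M.
  by have := congr1 (fun X : 'M_(m + m) => cj X) hP; rewrite /= cjM cjK cj_scalar rmorphN1.
exists (col_mx E ('i *: (cj E *m P))); split.
  rewrite /unitaryP_mx ctr_col mul_col_row ctrZ -!scalemxAl -!scalemxAr hE1 hE2.
  rewrite JE_orth JE1 !scaler0 scalerA conjCi mulrN -expr2 sqrCi opprK scale1r.
  by rewrite -scalar_mx_block.
rewrite Ymx_block mul_block_col !mul0mx add0r addr0 !mul_scalar_mx cj_col mul_col_mx.
rewrite cjZ cjM cjK -scalemxAl -mulmxA cjPP conjCi.
rewrite mul_mx_scalar scaleN1r scalerN scaleNr opprK scalerA mulNr -expr2 sqrCi.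
by rewrite opprK scale1r.
Qed.
End YmxBlock.

Lemma even_half n : ~~ odd n -> n = (n./2 + n./2)%N.
Proof. by move=> even_n; rewrite addnn -{1}(odd_double_half n) (negbTE even_n). Qed.

Lemma Ymx_even n : ~~ odd n ->
  [/\ ctr (Ymx n) = Ymx n, Ymx n *m Ymx n = 1%:M & cj (Ymx n) = - Ymx n].
Proof. by move/even_half ->; split; [exact: Ymx_ctr|exact: Ymx_sqr|exact: Ymx_cj]. Qed.

Lemma quaternionic_basis_even n (P : 'M[algC]_n) :
  unitaryP_mx P -> P *m cj P = (-1)%:M ->
  exists U : 'M[algC]_n, unitaryP_mx U /\ cj U *m P = Ymx n *m U.
Proof.
move=> uP hP; have /even_half n_eq := quaternionic_dim_even hP.
by move: P uP hP; rewrite n_eq; exact: quaternionic_basis.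
Qed.

Section StarRepresentation.
Variables (gT : finGroupType) (t : gT -> gT) (w : gT -> gT -> algC).
Variables (d : nat) (D : gT -> 'M[algC]_d).
Hypotheses (ht : involutive_aut t) (hw : normalized_U1_cocycle w).
Hypothesis hwt : forall g h, w g h * w (t g) (t h) = 1.
Hypothesis hD : irr_proj_unitary_rep w D.

Local Notation S := (star_rep t D).
Local Notation iota := (iota_ind t w D).

Let tK g : t (t g) = g. Proof. by case: ht. Qed.
Let irrD : irreducible_rep D. Proof. by case: hD. Qed.
Let uD g : unitaryP_mx (D g). Proof. by case: hD => -[]. Qed.
Let d_gt0 : (0 < d)%N. Proof. by case: irrD. Qed.
Let card_neq0 : (#|gT|%:R : algC) != 0.
Proof. by rewrite pnatr_eq0 -lt0n; apply/card_gt0P; exists 1%g. Qed.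

Lemma conj_cocycle_t g h : (w (t g) (t h))^* = w g h.
Proof.
have [w_norm _ _ _] := hw.
have wwC : w (t g) (t h) * (w (t g) (t h))^* = 1 by rewrite -normCK w_norm expr1n.
by rewrite -[LHS]mul1r -(hwt g h) -mulrA wwC mulr1.
Qed.

Lemma star_rep_irr : irr_proj_unitary_rep w S.
Proof.
have [[hDm _] [_ irr]] := hD.
split; first split.
- move=> g h; rewrite /star_rep -cjM hDm cjZ conj_cocycle_t.
  by case: ht => ->.
- by move=> g; exact: unitary_cj.
split=> // U hU.
have cjU_stable h : (cj U *m (D h)^T <= cj U)%MS.
  have := hU (t h); rewrite /star_rep tK.
  by rewrite -(map_submx conjC) -!/(cj _) cjM cj_tr cjK.
case: (irr _ cjU_stable) => [/eqP|].
  by rewrite /entry_conj_mx map_mx_eq0 => /eqP; left.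
by rewrite /row_full /entry_conj_mx mxrank_map; right.
Qed.

Lemma iota_conj : (#|gT|%:R * iota)^* = \sum_(g : gT) \tr (S g *m cj (D g)).
Proof.
have [[hDm _] _] := hD.
rewrite /iota_ind mulrA mulfV // mul1r rmorph_sum; apply: eq_bigr => g _.
by rewrite /proj_character -mxtraceZ -hDm -trace_map_mx -/(cj _) cjM.
Qed.

Lemma iota_nonequiv : ~ equiv_rep D S -> iota = 0.
Proof.
move=> not_equiv; have [[hSm _] _] := star_rep_irr.
have twirl0 X : twirl S D X = 0.
  have intertw := twirl_intertwines hSm hD.1 X.
  have [//|uT] := schur_intertwiner irrD intertw.
  case: not_equiv; exists (twirl S D X); split => // g.
  by rewrite -intertw -mulmxA mulmxV // mulmx1.
have := iota_conj; rewrite sum_trace_twirl big1 => [|i _]; last first.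
  by rewrite big1 // => j _; rewrite twirl0 mxE.
by move/eqP; rewrite conjC_eq0 mulf_eq0 (negbTE card_neq0) => /eqP.
Qed.

Lemma iota_unitary_equiv P c : unitaryP_mx P -> (forall g, S g = P *m D g *m ctr P) ->
  P *m cj P = c%:M -> c^* = c -> iota = c.
Proof.
move=> uP hS PcjP c_real.
have d_neq0 : (d%:R : algC) != 0 by rewrite pnatr_eq0 -lt0n.
have twirlSD X : twirl S D X = P *m twirl D D (ctr P *m X).
  by rewrite /twirl mulmx_sumr; apply: eq_bigr => g _; rewrite hS !mulmxA.
have := iota_conj; rewrite sum_trace_twirl.
have trPcjP : \sum_i \sum_j P i j * (P j i)^* = \tr (P *m cj P).
  by apply: eq_bigr => i _; rewrite !mxE; apply: eq_bigr => j _; rewrite !mxE.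
under eq_bigr => i _ do under eq_bigr => j _ do
  rewrite twirlSD (twirl_self hD) mxtrace_mul_delta mul_mx_scalar mxE !mxE mulrAC -mulrA.
under eq_bigr => i _ do rewrite -mulr_sumr.
rewrite -mulr_sumr trPcjP PcjP.
have -> : #|gT|%:R / d%:R * \tr (c%:M : 'M_d) = c * #|gT|%:R.
  by rewrite mxtrace_scalar -[c *+ d]mulr_natr mulrCA divfK // mulrC.
rewrite rmorphM /= rmorph_nat mulrC => /(mulIf card_neq0)/(congr1 conjC).
by rewrite conjCK c_real.
Qed.

Lemma star_equiv_sign P : unitaryP_mx P -> (forall g, S g = P *m D g *m ctr P) ->
  exists2 c, c = 1 \/ c = -1 & P *m cj P = c%:M.
Proof.
move=> uP hS; set M := cj P *m P.
have M_inv : M *m (ctr P *m P^T) = 1%:M.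
  by rewrite /M -!mulmxA (mulmxA P) uP mul1mx -cj_ctr -cjM uP cj1.
have DM g : D g = M *m D g *m (ctr P *m P^T).
  have cjD : cj (D g) = P *m D (t g) *m ctr P by rewrite -hS /star_rep tK.
  by rewrite -[LHS]cjK cjD !cjM cj_ctr -/(star_rep t D g) hS /M !mulmxA.
have M_comm h : M *m D h = D h *m M.
  by rewrite {2}(DM h) -(mulmxA _ (ctr P *m P^T)) (mulmx1C M_inv) mulmx1.
have [c Mc] := schur_scalar irrD M_comm.
have PcPT : P = c *: P^T.
  by rewrite -mul_mx_scalar -Mc /M mulmxA trmx_cj_unitary // mul1mx.
have PTc : P^T = c *: P by rewrite {1}PcPT linearZ /= trmxK.
have c2 : c ^+ 2 = 1.
  have : (c ^+ 2 - 1) *: P = 0 by rewrite scalerBl scale1r expr2 -scalerA -PTc -PcPT subrr.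
  move/eqP; rewrite scaler_eq0 subr_eq0 => /orP[/eqP //|/eqP P0].
  by have := unitary_neq0 d_gt0 uP; rewrite P0 eqxx.
have c_pm1 : c = 1 \/ c = -1 by move/eqP: c2; rewrite sqrf_eq1 => /orP[] /eqP; [left|right].
exists c => //.
rewrite -[P *m cj P]cjK cjM cjK -/M Mc cj_scalar.
by case: c_pm1 => ->; rewrite ?rmorph1 ?rmorphN1.
Qed.

Lemma iota_equiv : equiv_rep D S ->
  (iota = 1 \/ iota = -1) /\
  exists2 P, unitaryP_mx P & (forall g, S g = P *m D g *m ctr P) /\ P *m cj P = iota%:M.
Proof.
have [[_ uS] _] := star_rep_irr.
case/(unitary_equiv irrD uD uS) => P uP hS; have [c c_pm1 PcjP] := star_equiv_sign uP hS.
have -> : iota = c.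
  by apply: iota_unitary_equiv uP hS PcjP _; case: c_pm1 => ->; rewrite ?rmorph1 ?rmorphN1.
by split=> //; exists P.
Qed.

Lemma cj_change_basis_t U g : cj (change_basis U D (t g)) = cj U *m S g *m U^T.
Proof. by rewrite /change_basis !cjM cj_ctr. Qed.

Lemma star_change_basis U Q P : (forall g, S g = P *m D g *m ctr P) ->
  cj U *m P = Q *m U ->
  forall g, cj (change_basis U D (t g)) = Q *m change_basis U D g *m ctr Q.
Proof.
move=> hS hU g; rewrite cj_change_basis_t hS /change_basis.
have ctrPU : ctr P *m U^T = ctr U *m ctr Q by rewrite -ctr_cj -ctrM hU ctrM.
by rewrite !mulmxA hU -(mulmxA _ (ctr P)) ctrPU !mulmxA.
Qed.

Lemma change_basis_star U Q : unitaryP_mx U ->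
  (forall g, cj (change_basis U D (t g)) = Q *m change_basis U D g *m ctr Q) ->
  forall g, S g = (U^T *m Q *m U) *m D g *m ctr (U^T *m Q *m U).
Proof.
move=> uU hU g; have UTcjU := trmx_cj_unitary uU.
have -> : S g = U^T *m (cj U *m S g *m U^T) *m cj U.
  by rewrite !mulmxA UTcjU mul1mx -mulmxA UTcjU mulmx1.
by rewrite -cj_change_basis_t hU /change_basis !ctrM ctr_tr !mulmxA.
Qed.

Lemma iota_change_basis U Q c : unitaryP_mx U -> unitaryP_mx Q ->
  Q *m cj Q = c%:M -> c^* = c ->
  (forall g, cj (change_basis U D (t g)) = Q *m change_basis U D g *m ctr Q) ->
  iota = c.
Proof.
move=> uU uQ QcjQ c_real hU.
apply: iota_unitary_equiv (change_basis_star uU hU) _ c_real.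
  by apply: unitary_mul (unitary_mul (unitary_tr uU) uQ) uU.
rewrite !cjM -ctr_tr trmxK !mulmxA -(mulmxA _ U) uU mulmx1 -(mulmxA _ Q) QcjQ.
by rewrite mul_mx_scalar -scalemxAl trmx_cj_unitary // scalemx1.
Qed.

Lemma iota_values : iota \in [:: 0; 1; -1].
Proof.
have [/iota_equiv [[->|->] _]|/iota_nonequiv ->] := classic (equiv_rep D S).
all: by rewrite !inE eqxx ?orbT.
Qed.

Lemma iota_eq0_iff : iota = 0 <-> ~ equiv_rep D S.
Proof.
split=> [iota0 /iota_equiv [iota_pm1 _]|]; last exact: iota_nonequiv.
by move: iota_pm1; rewrite iota0 => -[] /eqP; rewrite eq_sym ?oppr_eq0 oner_eq0.
Qed.

Lemma equiv_of_iota_neq0 : iota != 0 -> equiv_rep D S.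
Proof.
move=> iota_neq0; have [//|/iota_nonequiv iota0] := classic (equiv_rep D S).
by rewrite iota0 eqxx in iota_neq0.
Qed.

Lemma iota_eq1_iff : iota = 1 <->
  exists U, unitaryP_mx U /\ forall g, cj (change_basis U D (t g)) = change_basis U D g.
Proof.
have conj1 X : 1%:M *m X *m ctr 1%:M = X :> 'M_d by rewrite mul1mx ctr1 mulmx1.
split=> [iota1|[U [uU hU]]].
  have equivDS : equiv_rep D S by apply: equiv_of_iota_neq0; rewrite iota1 oner_neq0.
  have [_ [P uP [hS]]] := iota_equiv equivDS.
  rewrite iota1 => PcjP; have [U [uU UP]] := real_structure_basis uP PcjP.
  exists U; split=> // g; rewrite -[RHS]conj1.
  by apply: star_change_basis hS _ _; rewrite mul1mx.
apply: (iota_change_basis (Q := 1%:M)) uU _ _ _ _ => [|||g].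
- by rewrite /unitaryP_mx ctr1 mulmx1.
- by rewrite cj1 mulmx1.
- exact: conjC1.
- by rewrite conj1.
Qed.

Lemma iota_eqN1_iff : iota = -1 <->
  ~~ odd d /\ exists U, unitaryP_mx U /\
    forall g, cj (change_basis U D (t g)) = Ymx d *m change_basis U D g *m Ymx d.
Proof.
split=> [iotaN1|[even_d [U [uU hU]]]].
  have equivDS : equiv_rep D S.
    by apply: equiv_of_iota_neq0; rewrite iotaN1 oppr_eq0 oner_neq0.
  have [_ [P uP [hS]]] := iota_equiv equivDS.
  rewrite iotaN1 => PcjP; have even_d := quaternionic_dim_even PcjP.
  have [ctrY _ _] := Ymx_even even_d.
  have [U [uU UP]] := quaternionic_basis_even uP PcjP.
  split=> //; exists U; split=> // g; rewrite -{2}ctrY.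
  exact: star_change_basis hS UP g.
have [ctrY YY cjY] := Ymx_even even_d.
apply: (iota_change_basis (Q := Ymx d)) uU _ _ _ _ => [|||g].
- by rewrite /unitaryP_mx ctrY YY.
- by rewrite cjY mulmxN YY scalar_mxN.
- exact: rmorphN1.
- by rewrite ctrY hU.
Qed.
End StarRepresentation.

Theorem mainTheorem5 (gT : finGroupType) (t : gT -> gT) (w : gT -> gT -> algC)
    (d : nat) (D : gT -> 'M[algC]_d) :
  involutive_aut t ->
  normalized_U1_cocycle w ->
  (forall g h, w g h * w (t g) (t h) = 1) ->
  irr_proj_unitary_rep w D ->
  [/\ irr_proj_unitary_rep w (star_rep t D),
      iota_ind t w D \in [:: 0; 1; -1],
      (iota_ind t w D = 0 <-> ~ equiv_rep D (star_rep t D)),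
      (iota_ind t w D = 1 <->
        (exists U : 'M[algC]_d, unitaryP_mx U /\
           (forall g, entry_conj_mx (change_basis U D (t g)) = change_basis U D g))) &
      (iota_ind t w D = -1 <->
        (~~ odd d /\
         exists U : 'M[algC]_d, unitaryP_mx U /\
           (forall g, entry_conj_mx (change_basis U D (t g)) =
                      Ymx d *m change_basis U D g *m Ymx d)))].
Proof.
move=> ht hw hwt hD; split.
- exact: star_rep_irr.
- exact: iota_values.
- exact: iota_eq0_iff.
- exact: iota_eq1_iff.
- exact: iota_eqN1_iff.
Qed.
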